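(* Let $\mathbf{R}=(\mathbf{R}^{\Rightarrow},\mathbf{R}^{\mathrm{o}})$ with $\mathbf{R}^{\Rightarrow}=\emptyset$, let $M$ be an $\mathbf{R}$-ordered model, $w$ a world of $M$, and $A,B$ Boolean formulas. Then $w\models\bigcirc(B/A)$ iff there exists a world $v$ with $v\models A\wedge B$ such that for every world $u$ with $u\succeq_I v$, $u\models A\rightarrow B$.
   Context: $\mathbf{R}^{\mathrm{o}}$ is a finite set of obligations $\bigcirc(B/A)$ ($A,B$ Boolean; body $b=A$, head $h=B$). An $\mathbf{R}$-ordered model is $M=(W,\succeq_N,\succeq_I,v)$ with $W\neq\emptyset$ and valuation $v$; since $\mathbf{R}^{\Rightarrow}=\emptyset$, all worlds falsify no normality conditional and $\succeq_N=W\times W$. The ideality ordering is $w_1\succeq_I w_2$ iff $V(w_1)\subseteq V(w_2)$, where $V(w)=\{r_i\in\mathbf{R}^{\mathrm{o}}:w\models b(r_i)\wedge\neg h(r_i)$ and $w\not\models b(r_j)$ for all $r_j\in\mathbf{R}^{\mathrm{o}}$ with $r_j\triangleright r_i\}$, for a fixed overriding relation $\triangleright$ on $\mathbf{R}^{\mathrm{o}}$. $\Vert A\Vert$ = worlds where $A$ holds; $\max_{\succeq_N}(X)=\{w\in X:\forall u\in X(u\succeq_N w\Rightarrow w\succeq_N u)\}$. Lifting: $U\succeq_I^{s}U'$ iff for every $u'\in U'$ there is $u\in U$ with $u\succeq_I u'$. Truth: $w\models\bigcirc(B/A)$ iff $\max_{\succeq_N}(\Vert A\wedge\neg B\Vert)\not\succeq_I^{s}\max_{\succeq_N}(\Vert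 A\wedge B\Vert)$. *)

From mathcomp Require Import all_boot.
Set Implicit Arguments. Unset Strict Implicit. Unset Printing Implicit Defensive.

Inductive form :=
| Atom of nat
| Top
| Bot
| Neg of form
| And of form & form
| Or of form & form
| Imp of form & form.

Fixpoint holds (v : nat -> bool) (f : form) : bool :=
  match f with
  | Atom n => v n
  | Top => true
  | Bot => false
  | Neg g => ~~ holds v g
  | And g h => holds v g && holds v h
  | Or g h => holds v g || holds v h
  | Imp g h => holds v g ==> holds v h
  end.

(* Obligation set R^o: a finite type I of rule labels, each obligation
   O(head i / body i); over j i means r_j |> r_i (r_j overrides r_i).
   Worlds: a type W with valuation val. *)
Section Model.
Variables (I : finType) (body head : I -> form) (over : rel I).
Variables (W : Type) (val : W -> nat -> bool).

Definition sat (w : W) (A : form) : bool := holds (val w) A.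

Definition ext (A : form) : W -> Prop := fun w => sat w A.

Definition viol (w : W) : pred I := fun i =>
  [&& sat w (body i), ~~ sat w (head i) &
      [forall j, over j i ==> ~~ sat w (body j)]].

Definition ideal_ge (w1 w2 : W) : Prop := forall i, viol w1 i -> viol w2 i.

(* normality ordering: since R^=> is empty, >=_N = W x W *)
Definition norm_ge (w1 w2 : W) : Prop := True.

Definition maxN (X : W -> Prop) : W -> Prop :=
  fun w => X w /\ forall u, X u -> norm_ge u w -> norm_ge w u.

Definition lift_ge (U U' : W -> Prop) : Prop :=
  forall u', U' u' -> exists u, U u /\ ideal_ge u u'.

Definition obl_true (w : W) (A B : form) : Prop :=
  ~ lift_ge (maxN (ext (And A (Neg B)))) (maxN (ext (And A B))).

End Model.

From mathcomp Require Import all_boot.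
From Stdlib Require Import Classical.

(** Since the normality ordering is total, taking [max_N] changes nothing, so
    [O(B/A)] fails exactly when every [A /\ B]-world is dominated in ideality by
    an [A /\ ~B]-world; negating this classically gives an [A /\ B]-world all of
    whose ideality-betters satisfy [A -> B]. *)

Section ObligationTruth.
Variables (I : finType) (body head : I -> form) (over : rel I).
Variables (W : Type) (val : W -> nat -> bool).

Lemma maxN_id (X : W -> Prop) (w : W) : maxN X w <-> X w.
Proof. by split=> [[]|Xw]. Qed.

Lemma not_lift_geP (U U' : W -> Prop) :
  ~ lift_ge body head over val U U' <->
  exists2 v, U' v & forall u, ideal_ge body head over val u v -> ~ U u.
Proof.
split=> [notUU'|[v U'v noU] UU']; last first.
  by have [u [Uu uv]] := UU' v U'v; exact: noU uv Uu.
apply: NNPP => noWitness; apply: notUU' => v U'v.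
apply: NNPP => noDom; apply: noWitness; exists v => // u uv Uu.
by apply: noDom; exists u.
Qed.

Lemma ext_And_Neg (A B : form) (w : W) :
  ext val (And A (Neg B)) w = ~~ sat val w (Imp A B).
Proof. by rewrite /ext /sat /=; case: (holds _ A). Qed.

End ObligationTruth.

Theorem proposition4 (I : finType) (body head : I -> form) (over : rel I)
  (W : Type) (val : W -> nat -> bool) (w : W) (A B : form) :
  obl_true body head over val w A B <->
  exists v : W, sat val v (And A B) /\
    forall u : W, ideal_ge body head over val u v -> sat val u (Imp A B).
Proof.
rewrite /obl_true not_lift_geP.
split=> [[v /maxN_id ABv noCounter]|[v [ABv AimpB]]].
  exists v; split=> // u uv; apply: contraT => notAimpB.
  by case: (noCounter u uv); apply/maxN_id; rewrite ext_And_Neg.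
exists v => [|u uv]; first exact/maxN_id.
by move/maxN_id; rewrite ext_And_Neg AimpB.
Qed.
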